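(* In the standing setting, let $(A,B,R,\sigma)$ be a normalized context. If $\mathcal{FC}\neq\varnothing$, then there exists a family $\{(g_i,f_i)\}_{i\in I}\subseteq\mathcal{FC}$ such that $B=\bigcup_{i\in I}B_i^\top$ with $B_i^\top\cap B_j^\top=\varnothing$ for all $i\ne j$; $B=\bigcup_{i\in I}B_i^\bot$ with $B_i^\bot\cap B_j^\bot=\varnothing$ for all $i\ne j$; $A=\bigcup_{i\in I}A_i^\top$ with $A_i^\top\cap A_j^\top=\varnothing$ for all $i\ne j$; $A=\bigcup_{i\in I}A_i^\bot$ with $A_i^\bot\cap A_j^\bot=\varnothing$ for all $i\ne j$.
   Context: Adjoint triple: for posets $(P_1,\le_1),(P_2,\le_2),(P_3,\le_3)$, maps $\&\colon P_1\times P_2\to P_3$, $\swarrow\colon P_3\times P_2\to P_1$, $\nwarrow\colon P_3\times P_1\to P_2$ with $x\le_1 z\swarrow y \iff x\,\&\,y\le_3 z \iff y\le_2 z\nwarrow x$ for all $x,y,z$. For lower-bounded posets, $\&$ has zero-divisors if there are $x\ne\bot_1$, $y\neq\bot_2$ with $x\,\&\,y=\bot_3$. Standing setting: $(L_1,\preceq_1,\bot_1,\top_1)$ and $(L_2,\preceq_2,\bot_2,\top_2)$ are complete lattices and $(P,\le,\bot,\top)$ is a bounded poset. A multi-adjoint frame consists of adjoint triples $(\&_i,\swarrow^i,\nwarrow_i)$, $i=1,\dots,n$, with respect to $L_1,L_2,P$; a property-oriented frame consists of adjoint triples $(\&^p_j,\swarrow_p^j,\nwarrow^p_j)$, $j=1,\dots,m$,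 with respect to $P,L_2,L_1$; an object-oriented frame consists of adjoint triples $(\&^o_k,\swarrow_o^k,\nwarrow^o_k)$, $k=1,\dots,s$, with respect to $L_1,P,L_2$. All conjunctors $\&_i,\&^p_j,\&^o_k$ have no zero-divisors. A context $(A,B,R,\sigma)$ consists of non-empty sets $A,B$, $R\colon A\times B\to P$, and maps $\sigma,\sigma_p,\sigma_o$ from $A\times B$ to the index sets of the three frames. It is normalized if every $a\in A$ has $b_1,b_2\in B$ with $R(a,b_1)\ne\bot$, $R(a,b_2)=\bot$, and every $b\in B$ has $a_1,a_2\in A$ with $R(a_1,b)\neq\bot$, $R(a_2,b)=\bot$. Fuzzy necessity operators: $g^{\uparrow_N}(a)=\inf\{g(b)\swarrow_o^{\sigma_o(a,b)}R(a,b)\mid b\in B\}$ for $g\in L_2^B$, and $f^{\downarrow^N}(b)=\inf\{f(a)\nwarrow^p_{\sigma_p(a,b)}R(a,b)\mid a\in A\}$ for $f\in L_1^A$. $\mathcal F_N=\{(g,f)\mid g\in L_2^B,\ f\in L_1^A,\ g^{\uparrow_N}=f,\ f^{\downarrow^N}=g\}$. For $X\subseteq B$, $\chi_X\in L_2^B$ takes value $\top_2$ on $X$ and $\bot_2$ elsewhere; for $Y\subseteq A$, $\chi_Y\in L_1^A$ takes value $\top_1$ on $Y$ and $\bot_1$ elsewhere. $\mathcal{FC}=\{(\chi_X,\chi_Y)\in\mathcal F_N\mid \varnothing\ne X\subsetneq B,\ \varnothing\neq Y\subsetneq A\}$. For $(g_i,f_i)\in\mathcal{FC}$: $B_i^\top=\{b\mid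 g_i(b)=\top_2\}$, $B_i^\bot=\{b\mid g_i(b)=\bot_2\}$, $A_i^\top=\{a\mid f_i(a)=\top_1\}$, $A_i^\bot=\{a\mid f_i(a)=\bot_1\}$. *)

From Stdlib Require Import ClassicalDescription.

Record CLattice := {
  cl_car :> Type;
  cl_le : cl_car -> cl_car -> Prop;
  cl_refl : forall x, cl_le x x;
  cl_antisym : forall x y, cl_le x y -> cl_le y x -> x = y;
  cl_trans : forall x y z, cl_le x y -> cl_le y z -> cl_le x z;
  cl_inf : (cl_car -> Prop) -> cl_car;
  cl_inf_lb : forall (S : cl_car -> Prop) x, S x -> cl_le (cl_inf S) x;
  cl_inf_glb : forall (S : cl_car -> Prop) y,
      (forall x, S x -> cl_le y x) -> cl_le y (cl_inf S)
}.

Definition cl_bot (L : CLattice) : L := cl_inf L (fun _ => True).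
Definition cl_top (L : CLattice) : L := cl_inf L (fun _ => False).

Definition cl_inf_fam (L : CLattice) (I : Type) (F : I -> L) : L :=
  cl_inf L (fun x => exists i, x = F i).

Record BPoset := {
  bp_car :> Type;
  bp_le : bp_car -> bp_car -> Prop;
  bp_refl : forall x, bp_le x x;
  bp_antisym : forall x y, bp_le x y -> bp_le y x -> x = y;
  bp_trans : forall x y z, bp_le x y -> bp_le y z -> bp_le x z;
  bp_bot : bp_car;
  bp_top : bp_car;
  bp_bot_le : forall x, bp_le bp_bot x;
  bp_le_top : forall x, bp_le x bp_top
}.

Definition adjoint_triple (P1 P2 P3 : Type)
  (le1 : P1 -> P1 -> Prop) (le2 : P2 -> P2 -> Prop) (le3 : P3 -> P3 -> Prop)
  (conj : P1 -> P2 -> P3) (sw : P3 -> P2 -> P1) (nw : P3 -> P1 -> P2) : Prop :=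
  forall x y z,
    (le1 x (sw z y) <-> le3 (conj x y) z) /\ (le3 (conj x y) z <-> le2 y (nw z x)).

Definition no_zero_divisors (P1 P2 P3 : Type) (bot1 : P1) (bot2 : P2) (bot3 : P3)
  (conj : P1 -> P2 -> P3) : Prop :=
  forall x y, x <> bot1 -> y <> bot2 -> conj x y <> bot3.

Definition idx (n : nat) := {k : nat | k < n}.

Definition normalized (P : BPoset) (A B : Type) (R : A -> B -> P) : Prop :=
  (forall a, exists b1 b2, R a b1 <> bp_bot P /\ R a b2 = bp_bot P) /\
  (forall b, exists a1 a2, R a1 b <> bp_bot P /\ R a2 b = bp_bot P).

Definition up_N (L1 L2 : CLattice) (P : BPoset) (s : nat) (A B : Type)
  (R : A -> B -> P) (sigma_o : A -> B -> idx s)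
  (sw_o : idx s -> L2 -> P -> L1) (g : B -> L2) : A -> L1 :=
  fun a => cl_inf_fam L1 B (fun b => sw_o (sigma_o a b) (g b) (R a b)).

Definition down_N (L1 L2 : CLattice) (P : BPoset) (m : nat) (A B : Type)
  (R : A -> B -> P) (sigma_p : A -> B -> idx m)
  (nw_p : idx m -> L1 -> P -> L2) (f : A -> L1) : B -> L2 :=
  fun b => cl_inf_fam L2 A (fun a => nw_p (sigma_p a b) (f a) (R a b)).

Definition chi (L : CLattice) (T : Type) (X : T -> Prop) : T -> L :=
  fun t => if excluded_middle_informative (X t) then cl_top L else cl_bot L.

Definition nonempty_proper (T : Type) (X : T -> Prop) : Prop :=
  (exists t, X t) /\ (exists t, ~ X t).

Definition in_FN (L1 L2 : CLattice) (P : BPoset) (m s : nat) (A B : Type)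
  (R : A -> B -> P) (sigma_p : A -> B -> idx m) (sigma_o : A -> B -> idx s)
  (nw_p : idx m -> L1 -> P -> L2) (sw_o : idx s -> L2 -> P -> L1)
  (g : B -> L2) (f : A -> L1) : Prop :=
  up_N L1 L2 P s A B R sigma_o sw_o g = f /\
  down_N L1 L2 P m A B R sigma_p nw_p f = g.

Definition in_FC (L1 L2 : CLattice) (P : BPoset) (m s : nat) (A B : Type)
  (R : A -> B -> P) (sigma_p : A -> B -> idx m) (sigma_o : A -> B -> idx s)
  (nw_p : idx m -> L1 -> P -> L2) (sw_o : idx s -> L2 -> P -> L1)
  (g : B -> L2) (f : A -> L1) : Prop :=
  in_FN L1 L2 P m s A B R sigma_p sigma_o nw_p sw_o g f /\
  exists (X : B -> Prop) (Y : A -> Prop),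
    nonempty_proper B X /\ nonempty_proper A Y /\
    g = chi L2 B X /\ f = chi L1 A Y.

(** For characteristic maps the necessity operators are crisp: [(χ_X)^{↑N}] is the
    characteristic map of [{a | R a b = ⊥ for all b ∉ X}], because [z ↙ ⊥ = ⊤],
    [⊤ ↙ y = ⊤] and, by the absence of zero-divisors, [⊥ ↙ y = ⊥] for [y ≠ ⊥]; dually
    for [↓^N].  Hence [(χ_X, χ_Y) ∈ FC] says that [R] vanishes on [Y × X^c] and on
    [Y^c × X], with [X] and [Y] maximal for this.  In a normalized context the
    complementary pair [(χ_{X^c}, χ_{Y^c})] then satisfies the same closure
    conditions, and the two concepts [(χ_X, χ_Y)], [(χ_{X^c}, χ_{Y^c})] form the
    required partitions.  If the lattices are trivial ([⊤ = ⊥]) the single given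
    concept already does. *)

From Stdlib Require Import ClassicalDescription Classical FunctionalExtensionality.

Lemma cl_le_top (L : CLattice) (x : L) : cl_le L x (cl_top L).
Proof. apply cl_inf_glb; intros _ []. Qed.

Lemma cl_bot_le (L : CLattice) (x : L) : cl_le L (cl_bot L) x.
Proof. apply cl_inf_lb; exact I. Qed.

Lemma cl_trivial_eq (L : CLattice) (x y : L) : cl_top L = cl_bot L -> x = y.
Proof.
  intro e.
  assert (to_top : forall z : L, z = cl_top L).
  { intro z; apply cl_antisym; [apply cl_le_top | rewrite e; apply cl_bot_le]. }
  now rewrite (to_top x), (to_top y).
Qed.

Lemma cl_inf_fam_top (L : CLattice) (I : Type) (F : I -> L) :
  (forall i, F i = cl_top L) -> cl_inf_fam L I F = cl_top L.
Proof.
  intro H; apply cl_antisym; [apply cl_le_top|].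
  apply cl_inf_glb; intros x [i ->]; rewrite H; apply cl_refl.
Qed.

Lemma cl_inf_fam_bot (L : CLattice) (I : Type) (F : I -> L) (i : I) :
  F i = cl_bot L -> cl_inf_fam L I F = cl_bot L.
Proof.
  intro H; apply cl_antisym; [|apply cl_bot_le].
  rewrite <- H; apply cl_inf_lb; now exists i.
Qed.

Section CharacteristicMap.
Variables (L : CLattice) (T : Type).

Lemma chi_in (Z : T -> Prop) t : Z t -> chi L T Z t = cl_top L.
Proof. unfold chi; destruct (excluded_middle_informative (Z t)); tauto. Qed.

Lemma chi_out (Z : T -> Prop) t : ~ Z t -> chi L T Z t = cl_bot L.
Proof. unfold chi; destruct (excluded_middle_informative (Z t)); tauto. Qed.

Lemma chi_ext (Z1 Z2 : T -> Prop) : (forall t, Z1 t <-> Z2 t) -> chi L T Z1 = chi L T Z2.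
Proof.
  intro h; apply functional_extensionality; intro t.
  destruct (classic (Z1 t)) as [z|z].
  - rewrite !chi_in; firstorder.
  - rewrite !chi_out; firstorder.
Qed.

Hypothesis L_nontrivial : cl_top L <> cl_bot L.

Lemma chi_eq_top (Z : T -> Prop) t : chi L T Z t = cl_top L <-> Z t.
Proof.
  split; [|apply chi_in]; intro h.
  apply NNPP; intro z; rewrite chi_out in h by exact z; auto.
Qed.

Lemma chi_eq_bot (Z : T -> Prop) t : chi L T Z t = cl_bot L <-> ~ Z t.
Proof.
  split; [|apply chi_out]; intros h z.
  rewrite chi_in in h by exact z; auto.
Qed.

Lemma chi_inj (Z1 Z2 : T -> Prop) : chi L T Z1 = chi L T Z2 -> forall t, Z1 t <-> Z2 t.
Proof. intros e t; rewrite <- (chi_eq_top Z1), <- (chi_eq_top Z2), e; reflexivity. Qed.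

End CharacteristicMap.

Lemma adjoint_triple_flip (P1 P2 P3 : Type) le1 le2 le3
  (conj : P1 -> P2 -> P3) (sw : P3 -> P2 -> P1) (nw : P3 -> P1 -> P2) :
  adjoint_triple P1 P2 P3 le1 le2 le3 conj sw nw ->
  adjoint_triple P2 P1 P3 le2 le1 le3 (fun y x => conj x y) nw sw.
Proof. intros H y x z; specialize (H x y z); tauto. Qed.

Lemma no_zero_divisors_flip (P1 P2 P3 : Type) (bot1 : P1) (bot2 : P2) (bot3 : P3)
  (conj : P1 -> P2 -> P3) :
  no_zero_divisors P1 P2 P3 bot1 bot2 bot3 conj ->
  no_zero_divisors P2 P1 P3 bot2 bot1 bot3 (fun y x => conj x y).
Proof. intros H y x hy hx; exact (H x y hx hy). Qed.

Section ResiduatedImplication.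
Variables (L1 : CLattice) (P : BPoset) (L2 : CLattice) (J : Type).
Variables (conj : J -> L1 -> P -> L2) (sw : J -> L2 -> P -> L1) (nw : J -> L2 -> L1 -> P).
Hypothesis Htriple : forall j,
  adjoint_triple L1 P L2 (cl_le L1) (bp_le P) (cl_le L2) (conj j) (sw j) (nw j).
Hypothesis Hzero : forall j,
  no_zero_divisors L1 P L2 (cl_bot L1) (bp_bot P) (cl_bot L2) (conj j).

Lemma sw_top j y : sw j (cl_top L2) y = cl_top L1.
Proof.
  apply cl_antisym; [apply cl_le_top|].
  apply (proj1 (Htriple j _ _ _)); apply cl_le_top.
Qed.

Lemma sw_bot_bot j : sw j (cl_bot L2) (bp_bot P) = cl_top L1.
Proof.
  apply cl_antisym; [apply cl_le_top|].
  apply (proj1 (Htriple j _ _ _)), (proj2 (proj2 (Htriple j _ _ _))), bp_bot_le.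
Qed.

Lemma sw_bot_neq j y : y <> bp_bot P -> sw j (cl_bot L2) y = cl_bot L1.
Proof.
  intro hy; set (x := sw j (cl_bot L2) y).
  assert (conj_bot : conj j x y = cl_bot L2).
  { apply cl_antisym; [|apply cl_bot_le].
    apply (proj1 (Htriple j _ _ _)); apply cl_refl. }
  apply NNPP; intro hx; exact (Hzero j x y hx hy conj_bot).
Qed.

Lemma inf_sw_chi (A B : Type) (R : A -> B -> P) (tau : A -> B -> J) (X : B -> Prop) :
  (fun a => cl_inf_fam L1 B (fun b => sw (tau a b) (chi L2 B X b) (R a b))) =
  chi L1 A (fun a => forall b, ~ X b -> R a b = bp_bot P).
Proof.
  apply functional_extensionality; intro a.
  destruct (classic (forall b, ~ X b -> R a b = bp_bot P)) as [vanish|not_vanish].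
  - rewrite chi_in by exact vanish; apply cl_inf_fam_top; intro b.
    destruct (classic (X b)) as [xb|xb].
    + rewrite chi_in by exact xb; apply sw_top.
    + rewrite chi_out, (vanish b xb) by exact xb; apply sw_bot_bot.
  - rewrite chi_out by exact not_vanish.
    destruct (not_all_ex_not _ _ not_vanish) as [b hb].
    apply imply_to_and in hb as [xb hR].
    apply cl_inf_fam_bot with b.
    rewrite chi_out by exact xb; now apply sw_bot_neq.
Qed.

End ResiduatedImplication.

(** [nec_closed R X Y] is the crisp form of [(χ_X, χ_Y) ∈ F_N]. *)
Definition nec_closed (P : BPoset) (A B : Type) (R : A -> B -> P)
  (X : B -> Prop) (Y : A -> Prop) : Prop :=
  (forall a, Y a <-> forall b, ~ X b -> R a b = bp_bot P) /\
  (forall b, X b <-> forall a, ~ Y a -> R a b = bp_bot P).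

Section ClosedPairs.
Variables (P : BPoset) (A B : Type) (R : A -> B -> P) (X : B -> Prop) (Y : A -> Prop).

Lemma nec_closed_sym :
  nec_closed P A B R X Y -> nec_closed P B A (fun b a => R a b) Y X.
Proof. unfold nec_closed; tauto. Qed.

Lemma nec_closed_support a b :
  nec_closed P A B R X Y -> R a b <> bp_bot P -> (Y a <-> X b).
Proof.
  intros [HY HX] hR; split; intro h; apply NNPP; intro h'; apply hR.
  - exact (proj1 (HY a) h b h').
  - exact (proj1 (HX b) h a h').
Qed.

Lemma nec_closed_compl_l :
  (forall a, exists b, R a b <> bp_bot P) -> nec_closed P A B R X Y ->
  forall a, ~ Y a <-> forall b, ~ ~ X b -> R a b = bp_bot P.
Proof.
  intros Hrow Hcl a; split.
  - intros ya b xb; apply NNPP in xb; exact (proj1 (proj2 Hcl b) xb a ya).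
  - intros vanish ya; destruct (Hrow a) as [b hR]; apply hR, vanish.
    intro xb; apply xb, (nec_closed_support a b Hcl hR), ya.
Qed.

End ClosedPairs.

Lemma nec_closed_compl (P : BPoset) (A B : Type) (R : A -> B -> P) X Y :
  normalized P A B R -> nec_closed P A B R X Y ->
  nec_closed P A B R (fun b => ~ X b) (fun a => ~ Y a).
Proof.
  intros [Hrow Hcol] Hcl; split.
  - apply nec_closed_compl_l; [|exact Hcl].
    intro a; destruct (Hrow a) as (b & _ & hb & _); now exists b.
  - apply (nec_closed_compl_l P B A (fun b a => R a b)); [|exact (nec_closed_sym _ _ _ _ _ _ Hcl)].
    intro b; destruct (Hcol b) as (a & _ & ha & _); now exists a.
Qed.

Definition compl_block (T : Type) (Z : T -> Prop) (i : bool) : T -> Prop :=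
  if i then Z else fun t => ~ Z t.

Lemma nonempty_proper_compl_block (T : Type) (Z : T -> Prop) i :
  nonempty_proper T Z -> nonempty_proper T (compl_block T Z i).
Proof.
  intros [[t1 h1] [t2 h2]]; destruct i; simpl.
  - split; eauto.
  - split; [exists t2 | exists t1]; auto.
Qed.

Definition partitions (L : CLattice) (I T : Type) (G : I -> T -> L) : Prop :=
  (forall t, exists i, G i t = cl_top L) /\
  (forall i j, i <> j -> forall t, ~ (G i t = cl_top L /\ G j t = cl_top L)) /\
  (forall t, exists i, G i t = cl_bot L) /\
  (forall i j, i <> j -> forall t, ~ (G i t = cl_bot L /\ G j t = cl_bot L)).

Lemma partitions_trivial (L : CLattice) (T : Type) (G : unit -> T -> L) :
  cl_top L = cl_bot L -> partitions L unit T G.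
Proof.
  intro e; repeat split.
  - intro t; exists tt; now apply cl_trivial_eq.
  - intros [] [] h; now contradiction h.
  - intro t; exists tt; now apply cl_trivial_eq.
  - intros [] [] h; now contradiction h.
Qed.

Lemma partitions_chi_compl_block (L : CLattice) (T : Type) (Z : T -> Prop) :
  cl_top L <> cl_bot L ->
  partitions L bool T (fun i => chi L T (compl_block T Z i)).
Proof.
  intro hL; unfold partitions.
  setoid_rewrite (chi_eq_top L T hL); setoid_rewrite (chi_eq_bot L T hL).
  repeat split.
  - intro t; destruct (classic (Z t)); [exists true | exists false]; auto.
  - intros [] [] hij t; simpl; tauto.
  - intro t; destruct (classic (Z t)); [exists false | exists true]; simpl; auto.
  - intros [] [] hij t; simpl; tauto.
Qed.

Section NecessityConcepts.
Variables (L1 L2 : CLattice) (P : BPoset) (m s : nat) (A B : Type) (R : A -> B -> P).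
Variables (sigma_p : A -> B -> idx m) (sigma_o : A -> B -> idx s).
Variables (conj_p : idx m -> P -> L2 -> L1) (sw_p : idx m -> L1 -> L2 -> P)
  (nw_p : idx m -> L1 -> P -> L2).
Variables (conj_o : idx s -> L1 -> P -> L2) (sw_o : idx s -> L2 -> P -> L1)
  (nw_o : idx s -> L2 -> L1 -> P).
Hypothesis H_pframe : forall j, adjoint_triple P L2 L1 (bp_le P) (cl_le L2) (cl_le L1)
  (conj_p j) (sw_p j) (nw_p j).
Hypothesis H_pframe0 : forall j, no_zero_divisors P L2 L1 (bp_bot P) (cl_bot L2) (cl_bot L1)
  (conj_p j).
Hypothesis H_oframe : forall k, adjoint_triple L1 P L2 (cl_le L1) (bp_le P) (cl_le L2)
  (conj_o k) (sw_o k) (nw_o k).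
Hypothesis H_oframe0 : forall k, no_zero_divisors L1 P L2 (cl_bot L1) (bp_bot P) (cl_bot L2)
  (conj_o k).

Lemma up_N_chi (X : B -> Prop) :
  up_N L1 L2 P s A B R sigma_o sw_o (chi L2 B X) =
  chi L1 A (fun a => forall b, ~ X b -> R a b = bp_bot P).
Proof. exact (inf_sw_chi L1 P L2 _ conj_o sw_o nw_o H_oframe H_oframe0 A B R sigma_o X). Qed.

Lemma down_N_chi (Y : A -> Prop) :
  down_N L1 L2 P m A B R sigma_p nw_p (chi L1 A Y) =
  chi L2 B (fun b => forall a, ~ Y a -> R a b = bp_bot P).
Proof.
  exact (inf_sw_chi L2 P L1 _ (fun j y x => conj_p j x y) nw_p sw_p
    (fun j => adjoint_triple_flip _ _ _ _ _ _ _ _ _ (H_pframe j))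
    (fun j => no_zero_divisors_flip _ _ _ _ _ _ _ (H_pframe0 j))
    B A (fun b a => R a b) (fun b a => sigma_p a b) Y).
Qed.

Let in_FN_chi X Y :=
  in_FN L1 L2 P m s A B R sigma_p sigma_o nw_p sw_o (chi L2 B X) (chi L1 A Y).

Lemma nec_closed_in_FN X Y : nec_closed P A B R X Y -> in_FN_chi X Y.
Proof.
  intros [HY HX]; unfold in_FN_chi, in_FN; rewrite up_N_chi, down_N_chi.
  split; apply chi_ext; firstorder.
Qed.

Lemma in_FN_nec_closed X Y :
  cl_top L1 <> cl_bot L1 -> cl_top L2 <> cl_bot L2 ->
  in_FN_chi X Y -> nec_closed P A B R X Y.
Proof.
  unfold in_FN_chi, in_FN; rewrite up_N_chi, down_N_chi; intros h1 h2 [HY HX].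
  split; intro; symmetry; [exact (chi_inj L1 A h1 _ _ HY _) | exact (chi_inj L2 B h2 _ _ HX _)].
Qed.

(** If [⊤ = ⊥] in [L2], then [χ_X] is the constant [⊤], whose [↑N] is the constant [⊤]. *)
Lemma in_FN_trivial_L1 X Y a0 :
  in_FN_chi X Y -> ~ Y a0 -> cl_top L2 = cl_bot L2 -> cl_top L1 = cl_bot L1.
Proof.
  intros [Hup _] ya0 e.
  replace (chi L2 B X) with (chi L2 B (fun _ => True)) in Hup
    by (apply functional_extensionality; intro; now apply cl_trivial_eq).
  rewrite up_N_chi in Hup.
  apply (f_equal (fun f => f a0)) in Hup.
  now rewrite chi_in, chi_out in Hup by tauto.
Qed.

Lemma in_FN_trivial_L2 X Y b0 :
  in_FN_chi X Y -> ~ X b0 -> cl_top L1 = cl_bot L1 -> cl_top L2 = cl_bot L2.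
Proof.
  intros [_ Hdown] xb0 e.
  replace (chi L1 A Y) with (chi L1 A (fun _ => True)) in Hdown
    by (apply functional_extensionality; intro; now apply cl_trivial_eq).
  rewrite down_N_chi in Hdown.
  apply (f_equal (fun f => f b0)) in Hdown.
  now rewrite chi_in, chi_out in Hdown by tauto.
Qed.

Lemma in_FC_compl_block X Y i :
  normalized P A B R -> cl_top L1 <> cl_bot L1 -> cl_top L2 <> cl_bot L2 ->
  nonempty_proper B X -> nonempty_proper A Y -> in_FN_chi X Y ->
  in_FC L1 L2 P m s A B R sigma_p sigma_o nw_p sw_o
    (chi L2 B (compl_block B X i)) (chi L1 A (compl_block A Y i)).
Proof.
  intros Hnorm h1 h2 hX hY HFN; split.
  - destruct i; [exact HFN|].
    apply nec_closed_in_FN, nec_closed_compl, in_FN_nec_closed; assumption.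
  - exists (compl_block B X i), (compl_block A Y i).
    refine (conj _ (conj _ (conj eq_refl eq_refl)));
      apply nonempty_proper_compl_block; assumption.
Qed.

End NecessityConcepts.

Theorem mainTheorem6
  (L1 L2 : CLattice) (P : BPoset)
  (n : nat) (conj : idx n -> L1 -> L2 -> P) (sw : idx n -> P -> L2 -> L1)
  (nw : idx n -> P -> L1 -> L2)
  (H_frame : forall i, adjoint_triple L1 L2 P (cl_le L1) (cl_le L2) (bp_le P)
                         (conj i) (sw i) (nw i))
  (H_frame0 : forall i, no_zero_divisors L1 L2 P (cl_bot L1) (cl_bot L2) (bp_bot P)
                          (conj i))
  (m : nat) (conj_p : idx m -> P -> L2 -> L1) (sw_p : idx m -> L1 -> L2 -> P)
  (nw_p : idx m -> L1 -> P -> L2)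
  (H_pframe : forall j, adjoint_triple P L2 L1 (bp_le P) (cl_le L2) (cl_le L1)
                          (conj_p j) (sw_p j) (nw_p j))
  (H_pframe0 : forall j, no_zero_divisors P L2 L1 (bp_bot P) (cl_bot L2) (cl_bot L1)
                           (conj_p j))
  (s : nat) (conj_o : idx s -> L1 -> P -> L2) (sw_o : idx s -> L2 -> P -> L1)
  (nw_o : idx s -> L2 -> L1 -> P)
  (H_oframe : forall k, adjoint_triple L1 P L2 (cl_le L1) (bp_le P) (cl_le L2)
                          (conj_o k) (sw_o k) (nw_o k))
  (H_oframe0 : forall k, no_zero_divisors L1 P L2 (cl_bot L1) (bp_bot P) (cl_bot L2)
                           (conj_o k))
  (A B : Type) (HA : inhabited A) (HB : inhabited B) (R : A -> B -> P)
  (sigma : A -> B -> idx n) (sigma_p : A -> B -> idx m) (sigma_o : A -> B -> idx s)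
  (Hnorm : normalized P A B R)
  (HFC : exists (g : B -> L2) (f : A -> L1),
           in_FC L1 L2 P m s A B R sigma_p sigma_o nw_p sw_o g f) :
  exists (I : Type) (G : I -> B -> L2) (F : I -> A -> L1),
    (forall i, in_FC L1 L2 P m s A B R sigma_p sigma_o nw_p sw_o (G i) (F i)) /\
    (* B = union of the B_i^top, pairwise disjoint *)
    (forall b, exists i, G i b = cl_top L2) /\
    (forall i j, i <> j -> forall b, ~ (G i b = cl_top L2 /\ G j b = cl_top L2)) /\
    (* B = union of the B_i^bot, pairwise disjoint *)
    (forall b, exists i, G i b = cl_bot L2) /\
    (forall i j, i <> j -> forall b, ~ (G i b = cl_bot L2 /\ G j b = cl_bot L2)) /\
    (* A = union of the A_i^top, pairwise disjoint *)
    (forall a, exists i, F i a = cl_top L1) /\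
    (forall i j, i <> j -> forall a, ~ (F i a = cl_top L1 /\ F j a = cl_top L1)) /\
    (* A = union of the A_i^bot, pairwise disjoint *)
    (forall a, exists i, F i a = cl_bot L1) /\
    (forall i j, i <> j -> forall a, ~ (F i a = cl_bot L1 /\ F j a = cl_bot L1)).
Proof.
  destruct HFC as (g & f & HFC).
  pose proof HFC as [HFN (X & Y & hX & hY & -> & ->)].
  pose proof hX as [_ [b0 xb0]]; pose proof hY as [_ [a0 ya0]].
  destruct (classic (cl_top L2 = cl_bot L2)) as [e2|n2].
  - assert (e1 : cl_top L1 = cl_bot L1) by (eapply in_FN_trivial_L1; eauto).
    exists unit, (fun _ => chi L2 B X), (fun _ => chi L1 A Y).
    destruct (partitions_trivial L2 B (fun _ => chi L2 B X) e2) as (? & ? & ? & ?),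
      (partitions_trivial L1 A (fun _ => chi L1 A Y) e1) as (? & ? & ? & ?).
    split; [intros _; exact HFC | tauto].
  - assert (n1 : cl_top L1 <> cl_bot L1) by (intro e1; eapply n2, in_FN_trivial_L2; eauto).
    exists bool, (fun i => chi L2 B (compl_block B X i)), (fun i => chi L1 A (compl_block A Y i)).
    destruct (partitions_chi_compl_block L2 B X n2) as (? & ? & ? & ?),
      (partitions_chi_compl_block L1 A Y n1) as (? & ? & ? & ?).
    split; [intro i; eapply in_FC_compl_block; eauto | tauto].
Qed.
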